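(* We have \[ h(4,m) \geq m^2 + 9m - 3 \text{ for } m \geq 3,\qquad h(8,m) \geq m^2 + 19m - 11 \text{ for } m \geq 4,\qquad h(16,m) \geq m^2 + 33m - 17 \text{ for } m \geq 10. \]
   Context: For a real matrix $A \in \mathbb{R}^{m\times n}$ and $1 \le k \le \min\{m,n\}$, let $\Delta_k(A)$ denote the maximum of $|\det(B)|$ over all $k\times k$ submatrices $B$ of $A$. The generalized Heller constant $h(\Delta,m)$ (for $\Delta, m \in \mathbb{Z}_{>0}$) is the maximum $n \in \mathbb{Z}_{>0}$ such that there exists an integer matrix $A \in \mathbb{Z}^{m\times n}$ with pairwise distinct columns and $\Delta_m(A) = \Delta$. *)

From mathcomp Require Import all_boot all_order all_algebra.
Set Implicit Arguments. Unset Strict Implicit. Unset Printing Implicit Defensive.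
Import Order.TTheory GRing.Theory Num.Theory.
Local Open Scope ring_scope.

(* A k x k submatrix is given by an injective choice of k rows and k columns
   (ordering of rows/columns only affects the sign of det). *)
Definition Delta (m n k : nat) (A : 'M[int]_(m, n)) : nat :=
  (\max_(f : {ffun 'I_k -> 'I_m} | injectiveb f)
     \max_(g : {ffun 'I_k -> 'I_n} | injectiveb g)
        `|\det (mxsub f g A)|%N)%N.

Definition heller_attained (D m n : nat) : Prop :=
  exists A : 'M[int]_(m, n),
    (forall i j : 'I_n, col i A = col j A -> i = j) /\ Delta m A = D.

(* h(D, m) >= N, where h(D, m) is the maximum of the attained n
   (a maximum that exists, i.e. the set of attained n is finite). *)
Definition heller_ge (D m N : nat) : Prop :=
  exists n : nat, (N <= n)%N /\ heller_attained D m n.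

From mathcomp Require Import all_boot all_order all_algebra perm zify.
Set Implicit Arguments. Unset Strict Implicit. Unset Printing Implicit Defensive.
Import Order.TTheory GRing.Theory Num.Theory.
Local Open Scope ring_scope.

(* Let L be a set of vectors of Z^k whose k x k minors have absolute value at
   most D, with D attained, and let S be a set containing 0 with S - S in L.
   Then the lifted pair
     L' = {(0, a) | a in L} u {(t, -t s) | t = +-1, s in S},
     S' = {(0, s) | s in S} u {(1, 0)}
   has the same properties in dimension k + 1: in a square matrix with columns in
   L', a column (t, -t s0) with t = +-1 clears the first row, and the reduced
   columns t (s0 - s) lie in L again.  Each lift adds 1 to |S| and 2 |S| to |L|,
   so j lifts of a base pair give an integer matrix with |L| + j (2 |S| + j - 1)
   distinct columns and Delta = D.  The base pairs (L = S - S) are explicit point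
   sets in dimension 2 (D = 4, 16) and 3 (D = 8). *)

Section ColumnSets.
Variable m : nat.
Implicit Types (L S : seq 'cV[int]_m) (D : nat).

Definition dets_bounded L D :=
  forall M : 'M[int]_m, (forall j, col j M \in L) -> (`|\det M| <= D)%N.

Definition det_attained L D :=
  exists2 M : 'M[int]_m, forall j, col j M \in L & `|\det M|%N = D.

Definition matrix_of_cols L : 'M[int]_(m, size L) := \matrix_(i, j) L`_j i 0.

Lemma col_matrix_of_cols L j : col j (matrix_of_cols L) = L`_j.
Proof. by apply/matrixP => i k; rewrite !mxE ord1. Qed.

Lemma absz_det_mxsub n (A : 'M[int]_(m, n)) (f : 'I_m -> 'I_m) g :
  injective f -> `|\det (mxsub f g A)|%N = `|\det (colsub g A)|%N.
Proof.
move=> f_inj; have -> : mxsub f g A = row_perm (perm f_inj) (colsub g A).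
  by apply/matrixP => i j; rewrite !mxE permE.
by rewrite row_permE det_mulmx det_perm abszMsign.
Qed.

Lemma Delta_matrix_of_cols_le L D : dets_bounded L D -> (Delta m (matrix_of_cols L) <= D)%N.
Proof.
move=> bounded; apply/bigmax_leqP => f /injectiveP f_inj; apply/bigmax_leqP => g _.
rewrite absz_det_mxsub //; apply: bounded => j.
by rewrite col_colsub col_matrix_of_cols mem_nth.
Qed.

Lemma Delta_matrix_of_cols_ge L D : det_attained L D -> (D <= Delta m (matrix_of_cols L))%N.
Proof.
case=> M M_cols <-; have [->|detM] := eqVneq (\det M) 0; first by rewrite absz0.
have col_inj : injective (fun j => col j M).
  move=> j1 j2 eq_col; apply/eqP; apply: contraNT detM => ne.
  apply/eqP; rewrite -det_tr; apply: (determinant_alternate ne) => i.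
  by have := congr1 (fun v : 'cV_m => v i 0) eq_col; rewrite !mxE.
have index_lt j : (index (col j M) L < size L)%N by rewrite index_mem.
pose g := [ffun j => Ordinal (index_lt j)].
have id_inj : injectiveb [ffun i : 'I_m => i] by apply/injectiveP => i j; rewrite !ffunE.
have g_inj : injectiveb g.
  apply/injectiveP => j1 j2; rewrite !ffunE => -[] /(congr1 (nth 0 L)).
  by rewrite !nth_index // => /col_inj.
have -> : M = mxsub [ffun i => i] g (matrix_of_cols L).
  by apply/matrixP => i j; rewrite !mxE !ffunE /= nth_index // mxE.
exact: leq_trans (leq_bigmax_cond _ g_inj) (leq_bigmax_cond _ id_inj).
Qed.

Lemma heller_attained_of_cols L D :
  uniq L -> dets_bounded L D -> det_attained L D -> heller_attained D m (size L).
Proof.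
move=> L_uniq bounded attained; exists (matrix_of_cols L); split.
  by move=> i j; rewrite !col_matrix_of_cols => /eqP; rewrite nth_uniq // => /eqP/val_inj.
by apply/eqP; rewrite eqn_leq Delta_matrix_of_cols_le // Delta_matrix_of_cols_ge.
Qed.

Record heller_config D L S : Prop := HellerConfig {
  heller_uniq_cols : uniq L;
  heller_uniq_gens : uniq S;
  heller_gens0 : 0 \in S;
  heller_gens_sub : {in S &, forall s t, s - t \in L};
  heller_dets_bounded : dets_bounded L D;
  heller_det_attained : det_attained L D }.

End ColumnSets.

Lemma det_block_pivot (R : comPzRingType) m (a : R) (b : 'rV[R]_m) (c : 'cV[R]_m) d :
  a * a = 1 -> \det (block_mx a%:M b (- a *: c) d) = a * \det (d + c *m b).
Proof.
move=> aa1; pose U := block_mx 1%:M (- a *: b) 0 1%:M.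
have detU : \det U = 1 by rewrite det_ublock !det1 mulr1.
rewrite -[LHS]mulr1 -detU -det_mulmx mulmx_block !mulmx0 !mulmx1 !addr0.
rewrite !mul_scalar_mx scalerA mulrN aa1 scaleN1r addNr.
rewrite -scalemxAl -scalemxAr scalerA mulrNN aa1 scale1r addrC.
by rewrite det_lblock det_scalar1.
Qed.

Lemma col_block_lshift (R : Type) m1 m2 n1 n2 (A : 'M[R]_(m1, n1)) (B : 'M_(m1, n2)) C
    (E : 'M_(m2, n2)) j :
  col (lshift n2 j) (block_mx A B C E) = col_mx (col j A) (col j C).
Proof. by rewrite block_mxEh -col_lsubmx row_mxKl col_col_mx. Qed.

Lemma col_block_rshift (R : Type) m1 m2 n1 n2 (A : 'M[R]_(m1, n1)) (B : 'M_(m1, n2)) C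
    (E : 'M_(m2, n2)) j :
  col (rshift n1 j) (block_mx A B C E) = col_mx (col j B) (col j E).
Proof. by rewrite block_mxEh -col_rsubmx row_mxKr col_col_mx. Qed.

Lemma col_block0 (R : Type) m n (A : 'M[R]_1) (B : 'rV_n) (C : 'cV_m) (E : 'M_(m, n)) :
  col 0 (block_mx A B C E) = col_mx A C.
Proof.
apply/matrixP => i k; rewrite !mxE; case: splitP => i' _; rewrite !mxE;
  by case: splitP => j //= _; rewrite [j]ord1 [k]ord1.
Qed.

Section Lift.
Variable m : nat.
Implicit Types (L S : seq 'cV[int]_m) (D : nat).

Definition lift_col (t : int) (v : 'cV[int]_m) : 'cV[int]_(1 + m) := col_mx t%:M v.

Definition lift_cols L S :=
  [seq lift_col 0 a | a <- L] ++ [seq lift_col t (- t *: s) | t <- [:: 1; -1], s <- S].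

Definition lift_gens S := lift_col 1 0 :: [seq lift_col 0 s | s <- S].

Lemma lift_col_inj t t' v v' : lift_col t v = lift_col t' v' -> t = t' /\ v = v'.
Proof. by case/eq_col_mx => /(congr1 (fun a : 'M_1 => a 0 0)); rewrite !mxE. Qed.

Lemma lift_col_top t v : lift_col t v 0 0 = t.
Proof. by rewrite mxE; case: splitP => // i _; rewrite ord1 mxE mulr1n. Qed.

Lemma lift_colB t t' v v' : lift_col t v - lift_col t' v' = lift_col (t - t') (v - v').
Proof. by rewrite /lift_col opp_col_mx add_col_mx raddfB. Qed.

Lemma lift_col00 : lift_col 0 0 = 0.
Proof. by rewrite /lift_col raddf0 col_mx0. Qed.

Lemma lift_colsP L S v : v \in lift_cols L S ->
  (exists2 a, a \in L & v = lift_col 0 a) \/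
  (exists t s, [/\ t * t = 1, s \in S & v = lift_col t (- t *: s)]).
Proof.
rewrite mem_cat => /orP [/mapP [a a_in ->]|/allpairsP [[t s] [/= t_in s_in ->]]].
  by left; exists a.
by right; exists t, s; split => //; move: t_in; rewrite !inE => /orP [] /eqP ->.
Qed.

Lemma size_lift_cols L S : size (lift_cols L S) = (size L + 2 * size S)%N.
Proof. by rewrite size_cat size_map size_allpairs. Qed.

Lemma uniq_lift_cols L S : uniq L -> uniq S -> uniq (lift_cols L S).
Proof.
move=> L_uniq S_uniq; rewrite cat_uniq map_inj_uniq; last by move=> a b /lift_col_inj [].
apply/and3P; split=> //.
  apply/hasPn => _ /allpairsP [[t s] [/= t_in _ ->]]; apply/mapP => -[a _].
  by case/lift_col_inj => t0; move: t_in; rewrite t0 !inE.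
apply: allpairs_uniq => //.
move=> [t s] [t' s'] /allpairsP [[t0 _] [/= t_in _ [-> _]]] _ /= /lift_col_inj [<- ss'].
congr pair; move: ss'; rewrite !inE in t_in.
by case/orP: t_in => /eqP ->; rewrite ?scaleN1r ?opprK ?scale1r // => /oppr_inj.
Qed.

Lemma lift_cols_block L S (M : 'M[int]_(1 + m)) :
  (forall j, col j M \in lift_cols L S) -> M 0 0 != 0 ->
  exists t s, [/\ t * t = 1, s \in S &
    M = block_mx t%:M (ursubmx M) (- t *: s) (drsubmx M)].
Proof.
move=> M_cols M00; have col0 : col 0 M = col_mx (ulsubmx M) (dlsubmx M).
  by rewrite -[in LHS](submxK M) col_block0.
case/lift_colsP: (M_cols 0) => [[a _ M0] | [t [s [tt s_in M0]]]].
  move: M00; have -> : M 0 0 = col 0 M 0 0 by rewrite mxE.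
  by rewrite M0 lift_col_top eqxx.
exists t, s; split => //; move: M0; rewrite col0 => /eq_col_mx [<- <-].
by rewrite submxK.
Qed.

Lemma dets_bounded_lift_pivot L S D (M : 'M[int]_(1 + m)) :
  {in S &, forall s t, s - t \in L} -> dets_bounded L D ->
  (forall j, col j M \in lift_cols L S) -> M 0 0 != 0 -> (`|\det M| <= D)%N.
Proof.
move=> S_sub bounded M_cols M00.
have [t [s0 [tt s0_in M_block]]] := lift_cols_block M_cols M00.
set b := ursubmx M in M_block; set d := drsubmx M in M_block.
have abs_t : `|t|%N = 1%N by apply/eqP; rewrite -[_ == _]andbb -muln_eq1 -abszM tt.
rewrite M_block det_block_pivot // abszM abs_t mul1n; apply: bounded => j.
have := M_cols (rshift 1 j); rewrite M_block col_block_rshift.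
rewrite [col j b]mx11_scalar mxE -/(lift_col _ _).
have -> : col j (d + s0 *m b) = col j d + b 0 j *: s0.
  by rewrite raddfD /= [col j (_ *m _)]colE -mulmxA -colE [col j b]mx11_scalar mul_mx_scalar mxE.
case/lift_colsP => [[a a_in /lift_col_inj [-> ->]] | [t' [s [tt' s_in /lift_col_inj [-> ->]]]]].
  by rewrite scale0r addr0.
rewrite scaleNr addrC -scalerBr; move/eqP: tt'; rewrite -expr2 sqrf_eq1.
by case/orP => /eqP ->; rewrite ?scaleN1r ?opprB ?scale1r S_sub.
Qed.

Lemma dets_bounded_lift L S D :
  {in S &, forall s t, s - t \in L} -> dets_bounded L D -> dets_bounded (lift_cols L S) D.
Proof.
move=> S_sub bounded M M_cols.
have [j0 Mj0 | row0] := pickP (fun j => M 0 j != 0); last first.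
  rewrite (expand_det_row _ 0) big1 ?absz0 // => j _.
  by move/negbFE/eqP: (row0 j) ->; rewrite mul0r.
have -> : `|\det M|%N = `|\det (xcol 0%R j0 M)|%N.
  by rewrite xcolE det_mulmx det_perm mulrC abszMsign.
apply: dets_bounded_lift_pivot S_sub bounded _ _.
  by move=> j; rewrite xcolEsub col_colsub.
by rewrite mxE tpermL.
Qed.

Lemma det_attained_lift L S D :
  0 \in S -> det_attained L D -> det_attained (lift_cols L S) D.
Proof.
move=> S0 [M M_cols detM]; exists (block_mx 1%:M 0 0 M); last first.
  by rewrite det_lblock det1 mul1r.
move=> j; case: (split_ordP j) => k ->.
  rewrite col_block_lshift !col_id -/(lift_col 1 0) mem_cat; apply/orP; right.
  by rewrite -(scaler0 _ (- 1)); apply: allpairs_f; rewrite ?inE.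
by rewrite col_block_rshift col0 -(raddf0 (@scalar_mx _ 1)) mem_cat map_f.
Qed.

Lemma uniq_lift_gens S : uniq S -> uniq (lift_gens S).
Proof.
move=> S_uniq; rewrite /= map_inj_uniq ?S_uniq ?andbT; last by move=> a b /lift_col_inj [].
by apply/mapP => -[s _ /lift_col_inj []].
Qed.

Lemma lift_gens0 S : 0 \in S -> 0 \in lift_gens S.
Proof. by move=> S0; rewrite -lift_col00 inE map_f ?orbT. Qed.

Lemma lift_gens_sub L S : 0 \in S -> {in S &, forall s t, s - t \in L} ->
  {in lift_gens S &, forall u v, u - v \in lift_cols L S}.
Proof.
move=> S0 S_sub u v; rewrite !inE.
have in_lift t s : t \in [:: 1; -1] -> s \in S -> lift_col t (- t *: s) \in lift_cols L S.
  by move=> t_in s_in; rewrite mem_cat (allpairs_f (fun t s => lift_col t (- t *: s))) ?orbT.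
have in_lift0 a : a \in L -> lift_col 0 a \in lift_cols L S.
  by move=> a_in; rewrite mem_cat map_f.
case/orP => [/eqP -> | /mapP [s s_in ->]]; case/orP => [/eqP -> | /mapP [t t_in ->]];
  rewrite lift_colB.
- by rewrite !subrr in_lift0 // -(subrr 0) S_sub.
- by rewrite subr0 sub0r -(scaleN1r t) in_lift ?inE.
- by rewrite sub0r subr0; have := in_lift (-1) s; rewrite opprK scale1r; apply; rewrite ?inE.
- by rewrite subrr in_lift0 ?S_sub.
Qed.

Lemma heller_config_lift D L S :
  heller_config D L S -> heller_config D (lift_cols L S) (lift_gens S).
Proof.
case=> L_uniq S_uniq S0 S_sub bounded attained; split.
- exact: uniq_lift_cols.
- exact: uniq_lift_gens.
- exact: lift_gens0.
- exact: lift_gens_sub.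
- exact: dets_bounded_lift.
- exact: det_attained_lift.
Qed.

End Lift.

Lemma heller_config_iter D k (L S : seq 'cV[int]_k) j : heller_config D L S ->
  exists L' S' : seq 'cV[int]_(j + k), [/\ heller_config D L' S',
    size S' = (size S + j)%N & size L' = (size L + j * (2 * size S + j.-1))%N].
Proof.
move=> config; elim: j => [|j [L' [S' [config' sizeS sizeL]]]].
  by exists L, S; rewrite addn0 mul0n addn0.
exists (lift_cols L' S'), (lift_gens S'); split; first exact: heller_config_lift.
  by rewrite /= size_map sizeS addnS.
rewrite size_lift_cols sizeL sizeS; nia.
Qed.

Lemma heller_ge_of_config D k (L S : seq 'cV[int]_k) m N :
  heller_config D L S -> (k <= m)%N ->
  (N <= size L + (m - k) * (2 * size S + (m - k).-1))%N -> heller_ge D m N.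
Proof.
move=> config /subnK; move: (m - k)%N => j <- N_le.
have [L' [S' [[L'_uniq _ _ _ bounded attained] _ sizeL]]] := heller_config_iter j config.
by exists (size L'); split; [rewrite sizeL | exact: heller_attained_of_cols].
Qed.

Fixpoint all_tuples (T : Type) (P : seq T -> bool) k (s : seq T) : bool :=
  if k is k'.+1 then all (fun x => all_tuples (fun xs => P (x :: xs)) k' s) s else P [::].

Lemma all_tuplesP (T : eqType) (P : seq T -> bool) k s xs :
  all_tuples P k s -> size xs = k -> all (mem s) xs -> P xs.
Proof.
elim: xs k P => [|x xs IHxs] [|k] P //= /allP all_P [size_xs] /andP [x_in xs_in].
exact: IHxs (all_P x x_in) size_xs xs_in.
Qed.

Lemma eq_all_tuples (T : Type) (P1 P2 : seq T -> bool) k s :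
  P1 =1 P2 -> all_tuples P1 k s = all_tuples P2 k s.
Proof.
elim: k P1 P2 => [|k IHk] P1 P2 eq_P //=.
by apply: eq_all => x; apply: IHk => xs; apply: eq_P.
Qed.

(* Points are lists of integers rather than column vectors, so that the base
   pairs can be checked by [vm_compute]. *)
Section Points.
Variable k : nat.

Definition cvec (p : seq int) : 'cV[int]_k := \col_i p`_i.

Definition mx_of_points (ps : seq (seq int)) : 'M[int]_k := \matrix_(i, j) (nth [::] ps j)`_i.

Definition sub_points (p q : seq int) : seq int := [seq x.1 - x.2 | x <- zip p q].

Definition diffs (P : seq (seq int)) := undup [seq sub_points p q | p <- P, q <- P].

Lemma col_mx_of_points ps j : col j (mx_of_points ps) = cvec (nth [::] ps j).
Proof. by apply/matrixP => i l; rewrite !mxE. Qed.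

Lemma cvec_sub p q : size p = size q -> cvec (sub_points p q) = cvec p - cvec q.
Proof.
move=> eq_size; apply/matrixP => i l; rewrite !mxE.
have [lt_i | le_i] := ltnP i (size p).
  by rewrite (nth_map (0, 0)) ?nth_zip // size_zip -eq_size minnn.
by rewrite !nth_default ?subr0 // ?size_map ?size_zip -?eq_size ?minnn.
Qed.

Lemma cvec_inj : {in [pred p | size p == k] &, injective cvec}.
Proof.
move=> p q /eqP size_p /eqP size_q eq_pq; apply: (@eq_from_nth _ 0) => [|i lt_i].
  by rewrite size_p size_q.
rewrite size_p in lt_i.
by have := congr1 (fun v : 'cV_k => v (Ordinal lt_i) 0) eq_pq; rewrite !mxE.
Qed.

Lemma heller_config_points D (P : seq (seq int)) :
  all (fun p => size p == k) P -> uniq P -> nseq k 0 \in P ->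
  dets_bounded (map cvec (diffs P)) D -> det_attained (map cvec (diffs P)) D ->
  heller_config D (map cvec (diffs P)) (map cvec P).
Proof.
move=> /allP P_size P_uniq P0 bounded attained.
have diffs_size : {subset diffs P <= [pred p | size p == k]}.
  move=> d; rewrite mem_undup => /allpairsP [[p q] [/= p_in q_in ->]].
  by rewrite inE size_map size_zip (eqP (P_size p p_in)) (eqP (P_size q q_in)) minnn.
split=> //.
- by rewrite map_inj_in_uniq ?undup_uniq // => p q /diffs_size ? /diffs_size ?; apply: cvec_inj.
- by rewrite map_inj_in_uniq // => p q /P_size ? /P_size ?; apply: cvec_inj.
- have -> : 0 = cvec (nseq k 0) by apply/matrixP => i l; rewrite !mxE nth_nseq if_same.
  exact: map_f.
- move=> _ _ /mapP [p p_in ->] /mapP [q q_in ->].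
  rewrite -cvec_sub; last by rewrite (eqP (P_size p p_in)) (eqP (P_size q q_in)).
  by rewrite map_f // mem_undup allpairs_f.
Qed.

Lemma dets_bounded_points L (D : nat) :
  all_tuples (fun ps => `|\det (mx_of_points ps)| <= D)%N k L ->
  dets_bounded (map cvec L) D.
Proof.
move=> bounded M M_cols.
have index_lt j : (index (col j M) (map cvec L) < size L)%N by rewrite -(size_map cvec) index_mem.
pose ps := [seq nth [::] L (index (col j M) (map cvec L)) | j <- enum 'I_k].
have cvec_ps (j : 'I_k) : cvec (nth [::] ps j) = col j M.
  by rewrite (nth_map j) ?size_enum_ord // nth_ord_enum -(nth_map [::] 0) // nth_index.
have -> : M = mx_of_points ps.
  apply/matrixP => i j; have -> : M i j = col j M i 0 by rewrite mxE.
  by rewrite -cvec_ps !mxE.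
apply: (all_tuplesP bounded); first by rewrite size_map size_enum_ord.
by apply/allP => _ /mapP [j _ ->]; exact: mem_nth.
Qed.

Lemma det_attained_points L (D : nat) ps :
  size ps = k -> all (mem L) ps -> `|\det (mx_of_points ps)|%N = D ->
  det_attained (map cvec L) D.
Proof.
move=> size_ps /allP ps_L detD; exists (mx_of_points ps) => // j.
by rewrite col_mx_of_points map_f //; apply: ps_L; rewrite mem_nth // size_ps.
Qed.

End Points.

Lemma det_mx22 (R : comPzRingType) (M : 'M[R]_2) : \det M = M 0 0 * M 1 1 - M 0 1 * M 1 0.
Proof.
rewrite (expand_det_row _ 0) !big_ord_recl big_ord0 /cofactor !det_mx11 !mxE /=.
rewrite expr0 expr1 mul1r addr0 mulN1r mulrN.
by congr (M _ _ * M _ _ - M _ _ * M _ _); apply/val_inj.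
Qed.

Lemma det_mx33 (R : comPzRingType) (M : 'M[R]_3) : \det M =
  M 0 0 * (M 1 1 * M 2 2 - M 1 2 * M 2 1) - M 0 1 * (M 1 0 * M 2 2 - M 1 2 * M 2 0)
  + M 0 2 * (M 1 0 * M 2 1 - M 1 1 * M 2 0).
Proof.
rewrite (expand_det_row _ 0) !big_ord_recl big_ord0 /cofactor !det_mx22 !mxE /=.
rewrite expr0 expr1 expr2 mulrNN addr0 mulN1r mulrN !mul1r addrA.
by congr (M _ _ * (M _ _ * M _ _ - M _ _ * M _ _) - M _ _ * (M _ _ * M _ _ - M _ _ * M _ _)
  + M _ _ * (M _ _ * M _ _ - M _ _ * M _ _)); apply/val_inj.
Qed.

Definition points4 : seq (seq int) :=
  [:: [:: 0; 0]; [:: 1; 0]; [:: 0; 1]; [:: 1; 1]; [:: 1; 2]; [:: 2; 1]; [:: 2; 2]].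

Lemma heller_config4 : heller_config 4 (map (cvec 2) (diffs points4)) (map (cvec 2) points4).
Proof.
apply: heller_config_points => //.
  apply: dets_bounded_points.
  (* Reducing the ordinal literals of [det_mx22] to numerals once, rather than
     for every pair, makes the check (and its kernel re-check) much faster. *)
  by under eq_all_tuples do rewrite det_mx22 !mxE /= ?modn_small //; vm_compute.
apply: (@det_attained_points _ _ _ [:: [:: 2; 0]; [:: 0; 2]]).
- by [].
- by vm_compute.
- by rewrite det_mx22 !mxE.
Qed.

Definition points8 : seq (seq int) :=
  [:: [:: 0; 0; 0]; [:: 0; 0; 1]; [:: 0; 1; 0]; [:: 0; 1; 1]; [:: 1; -1; 1];
      [:: 1; 0; 0]; [:: 1; 0; 1]; [:: 1; 0; 2]; [:: 1; 1; 1]; [:: 2; -1; 1];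
      [:: 2; -1; 2]; [:: 2; 0; 1]; [:: 2; 0; 2]].

Lemma heller_config8 : heller_config 8 (map (cvec 3) (diffs points8)) (map (cvec 3) points8).
Proof.
apply: heller_config_points => //.
  apply: dets_bounded_points.
  by under eq_all_tuples do rewrite det_mx33 !mxE /= ?modn_small //; vm_compute.
apply: (@det_attained_points _ _ _ [:: [:: 2; 0; 0]; [:: 0; 2; 0]; [:: 0; 0; 2]]).
- by [].
- by vm_compute.
- by rewrite det_mx33 !mxE.
Qed.

Definition points16 : seq (seq int) :=
  [:: [:: -4; -2]; [:: -4; -1]; [:: -4; 0]; [:: -3; -2]; [:: -3; -1]; [:: -3; 0];
      [:: -3; 1]; [:: -2; -2]; [:: -2; -1]; [:: -2; 0]; [:: -2; 1]; [:: -2; 2];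
      [:: -1; -1]; [:: -1; 0]; [:: -1; 1]; [:: -1; 2]; [:: 0; 0]; [:: 0; 1]; [:: 0; 2]].

Lemma heller_config16 :
  heller_config 16 (map (cvec 2) (diffs points16)) (map (cvec 2) points16).
Proof.
apply: heller_config_points => //.
  apply: dets_bounded_points.
  by under eq_all_tuples do rewrite det_mx22 !mxE /= ?modn_small //; vm_compute.
apply: (@det_attained_points _ _ _ [:: [:: 4; 0]; [:: 0; 4]]).
- by [].
- by vm_compute.
- by rewrite det_mx22 !mxE.
Qed.

Theorem theorem1p3 :
  (forall m : nat, (3 <= m)%N -> heller_ge 4 m (m ^ 2 + 9 * m - 3)%N) /\
  (forall m : nat, (4 <= m)%N -> heller_ge 8 m (m ^ 2 + 19 * m - 11)%N) /\
  (forall m : nat, (10 <= m)%N -> heller_ge 16 m (m ^ 2 + 33 * m - 17)%N).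
Proof.
split; [|split] => m m_ge.
- apply: (heller_ge_of_config heller_config4); first lia.
  rewrite !size_map; have -> : size (diffs points4) = 19%N by vm_compute.
  rewrite /=; nia.
- apply: (heller_ge_of_config heller_config8); first lia.
  rewrite !size_map; have -> : size (diffs points8) = 55%N by vm_compute.
  rewrite /=; nia.
- apply: (heller_ge_of_config heller_config16); first lia.
  rewrite !size_map; have -> : size (diffs points16) = 61%N by vm_compute.
  rewrite /=; nia.
Qed.
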